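(* Let $S$ be a set with $|S|\ge2$ and let $\Gamma$ be a connected simple graph with vertex set $S$. For each edge $e\in E(\Gamma)$ let $eV^{(S)}\le SV$ be the associated subgroup (isomorphic to $2V$). Then $\bigcup_{e\in E(\Gamma)}eV^{(S)}$ generates $SV$.
   Context: Let $\mathfrak C=\{0,1\}^{\omega}$ and let $\mathfrak C^S$ be the space of functions $S\to\mathfrak C$. For $\psi\colon S\to\{0,1\}^*$ with $\psi(s)=\varnothing$ for all but finitely many $s$, the dyadic brick $B(\psi)$ is the set of $\kappa\in\mathfrak C^S$ with $\psi(s)$ a prefix of $\kappa(s)$ for all $s$, and the canonical homeomorphism $\Phi_\psi\colon\mathfrak C^S\to B(\psi)$ is $\Phi_\psi(\kappa)(s)=\psi(s)\cdot\kappa(s)$. The Brin–Thompson group $SV$ is the group of homeomorphisms of $\mathfrak C^S$ for which there exist two partitions $B(\varphi_1),\dots,B(\varphi_n)$ and $B(\psi_1),\dots,B(\psi_n)$ of $\mathfrak C^S$ into dyadic bricks such that $h$ maps each $B(\varphi_i)$ to $B(\psi_i)$ via $\Phi_{\psi_i}\circ\Phi_{\varphi_i}^{-1}$. For $T\subseteq S$, writing $\mathfrak C^S=\mathfrak C^T\times\mathfrak C^{S\setminus T}$, let $TV^{(S)}$ be the subgroup of $SV$ consisting of maps of the form $(a,b)\mapsto(h(a),b)$ with $h\in TV$; it is isomorphic to $TV$, and for a two-element set $e$, $eV^{(S)}$ is isomorphic to Brin's group $2V$. *)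

From Stdlib Require Import List Arith Relations Classical ClassicalEpsilon.
Import ListNotations.

Definition Cantor := nat -> bool.

Definition word := list bool.

Definition prefix_of (v : word) (c : Cantor) : Prop :=
  forall i, i < length v -> c i = nth i v false.

Definition wcat (v : word) (c : Cantor) : Cantor :=
  fun i => if i <? length v then nth i v false else c (i - length v).

Definition fin_supp {X : Type} (psi : X -> word) : Prop :=
  exists l : list X, forall s, ~ In s l -> psi s = [].

Definition brick {X : Type} (psi : X -> word) (k : X -> Cantor) : Prop :=
  forall s, prefix_of (psi s) (k s).

Definition Phi {X : Type} (psi : X -> word) (k : X -> Cantor) : X -> Cantor :=
  fun s => wcat (psi s) (k s).

Definition brick_partition {X : Type} (n : nat) (phi : nat -> X -> word) : Prop :=
  (forall i, i < n -> fin_supp (phi i)) /\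
  (forall i j k, i < n -> j < n -> brick (phi i) k -> brick (phi j) k -> i = j) /\
  (forall k, exists i, i < n /\ brick (phi i) k).

(* Brin--Thompson group XV: maps h of C^X that send each B(phi i) onto B(psi i)
   via Phi_{psi i} o Phi_{phi i}^{-1}, for two brick partitions.
   (Such maps are automatically homeomorphisms.) *)
Definition BV (X : Type) (h : (X -> Cantor) -> (X -> Cantor)) : Prop :=
  exists (n : nat) (phi psi : nat -> X -> word),
    brick_partition n phi /\ brick_partition n psi /\
    forall i k, i < n -> h (Phi (phi i) k) = Phi (psi i) k.

(* For T a subset of S, C^S = C^T x C^(S\T); TV^(S) acts on the first factor. *)
Definition restrictT {S : Type} (T : S -> Prop) (k : S -> Cantor)
  : {x : S | T x} -> Cantor := fun x => k (proj1_sig x).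

Definition extendT {S : Type} (T : S -> Prop)
  (h : ({x : S | T x} -> Cantor) -> ({x : S | T x} -> Cantor))
  (k : S -> Cantor) : S -> Cantor :=
  fun s => match excluded_middle_informative (T s) with
           | left p => h (restrictT T k) (exist _ s p)
           | right _ => k s
           end.

Definition subV {S : Type} (T : S -> Prop) (f : (S -> Cantor) -> (S -> Cantor)) : Prop :=
  exists h, BV {x : S | T x} h /\ f = extendT T h.

Definition edgeV {S : Type} (s t : S) := subV (fun x => x = s \/ x = t).

Inductive generated {A : Type} (G : (A -> A) -> Prop) : (A -> A) -> Prop :=
| gen_base f : G f -> generated G f
| gen_id : generated G (fun x => x)
| gen_comp f g : generated G f -> generated G g -> generated G (fun x => f (g x))
| gen_inv f g : generated G f -> (forall x, g (f x) = x) -> (forall x, f (g x) = x) ->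
                generated G g.

(* Elements of [SV] are the maps given by finite tables of pairs of dyadic bricks; tables can
   be refined, composed and inverted, so the group generated by the [eV^(S)] lies in [SV].
   Conversely, an element whose table only involves the vertices [T] of a tree in the graph
   is generated, by induction on the tree: if [T] arises by attaching a leaf [r] to [u], an
   element of [TV^(S)] gathers the [T]-coordinates of each domain brick into coordinate [u],
   and an element of [{u,r}V^(S)] appends the word at [r] there; after this precomposition,
   and the same treatment of the inverse, [r] is no longer involved. *)

From Stdlib Require Import List Arith Relations Classical ClassicalEpsilon Lia
  FunctionalExtensionality ProofIrrelevance.
Import ListNotations.

Definition cdrop (n : nat) (c : Cantor) : Cantor := fun i => c (i + n).

Definition ctake (n : nat) (c : Cantor) : word := map c (seq 0 n).

Lemma prefix_of_wcat v c : prefix_of v (wcat v c).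
Proof. intros i Hi; unfold wcat; rewrite (proj2 (Nat.ltb_lt _ _) Hi); reflexivity. Qed.

Lemma wcat_cdrop v k : prefix_of v k -> wcat v (cdrop (length v) k) = k.
Proof.
  intro H; apply functional_extensionality; intro i; unfold wcat, cdrop.
  destruct (Nat.ltb_spec i (length v)).
  - symmetry; apply H; auto.
  - f_equal; lia.
Qed.

Lemma cdrop_wcat v c : cdrop (length v) (wcat v c) = c.
Proof.
  apply functional_extensionality; intro i; unfold wcat, cdrop.
  destruct (Nat.ltb_spec (i + length v) (length v)); [lia|]. f_equal; lia.
Qed.

Lemma wcat_nil c : wcat [] c = c.
Proof. apply functional_extensionality; intro i; unfold wcat; simpl. f_equal; lia. Qed.

Lemma cdrop0 c : cdrop 0 c = c.
Proof. apply functional_extensionality; intro i; unfold cdrop; f_equal; lia. Qed.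

Lemma wcat_app v w c : wcat v (wcat w c) = wcat (v ++ w) c.
Proof.
  apply functional_extensionality; intro i; unfold wcat. rewrite length_app.
  destruct (Nat.ltb_spec i (length v)).
  - destruct (Nat.ltb_spec i (length v + length w)); [|lia].
    rewrite app_nth1; auto.
  - destruct (Nat.ltb_spec (i - length v) (length w));
    destruct (Nat.ltb_spec i (length v + length w)); try lia.
    + rewrite app_nth2; auto.
    + f_equal; lia.
Qed.

Lemma prefix_of_app v w k :
  prefix_of (v ++ w) k <-> prefix_of v k /\ prefix_of w (cdrop (length v) k).
Proof.
  unfold prefix_of, cdrop; split.
  - intros H; split.
    + intros i Hi. rewrite H by (rewrite length_app; lia). rewrite app_nth1; auto.
    + intros i Hi. rewrite H by (rewrite length_app; lia). rewrite app_nth2 by lia.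
      f_equal; lia.
  - intros [H1 H2] i Hi. rewrite length_app in Hi.
    destruct (Nat.lt_ge_cases i (length v)).
    + rewrite app_nth1; auto.
    + rewrite app_nth2 by lia. rewrite <- H2 by lia. f_equal; lia.
Qed.

Lemma prefix_of_nil k : prefix_of [] k.
Proof. intros i Hi; simpl in Hi; lia. Qed.

Lemma prefix_of_extends v w k : prefix_of v k -> prefix_of w k -> length v <= length w ->
  w = v ++ skipn (length v) w.
Proof.
  intros Hv Hw Hl. rewrite <- (firstn_skipn (length v) w) at 1. f_equal.
  apply nth_ext with (d := false) (d' := false).
  - rewrite length_firstn; lia.
  - intros i Hi. rewrite length_firstn in Hi.
    rewrite nth_firstn. destruct (Nat.ltb_spec i (length v)); [|lia].
    rewrite <- Hv, <- Hw by lia; auto.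
Qed.

Lemma prefix_of_unique v w k : prefix_of v k -> prefix_of w k -> length v = length w -> v = w.
Proof.
  intros Hv Hw Hl. rewrite (prefix_of_extends v w k) by (auto; lia).
  rewrite Hl, skipn_all, app_nil_r; auto.
Qed.

Lemma length_ctake n c : length (ctake n c) = n.
Proof. unfold ctake; rewrite length_map, length_seq; auto. Qed.

Lemma prefix_of_ctake n c : prefix_of (ctake n c) c.
Proof.
  intros i Hi. rewrite length_ctake in Hi. unfold ctake.
  rewrite nth_indep with (d' := c 0) by (rewrite length_map, length_seq; auto).
  rewrite map_nth, seq_nth; auto.
Qed.

Lemma le_list_max n l : In n l -> n <= list_max l.
Proof.
  intro H. assert (Hl : Forall (fun k => k <= list_max l) l) by (apply list_max_le; auto).
  rewrite Forall_forall in Hl; auto.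
Qed.

Section Tables.
Variable X : Type.
Implicit Types (a b : X -> word) (y k : X -> Cantor) (h : (X -> Cantor) -> (X -> Cantor)).

Definition wapp a b : X -> word := fun s => a s ++ b s.

Definition strip a k : X -> Cantor := fun s => cdrop (length (a s)) (k s).

Lemma Phi_wapp a b y : Phi a (Phi b y) = Phi (wapp a b) y.
Proof. apply functional_extensionality; intro s; apply wcat_app. Qed.

Lemma brick_Phi a y : brick a (Phi a y).
Proof. intro s; apply prefix_of_wcat. Qed.

Lemma Phi_strip a k : brick a k -> Phi a (strip a k) = k.
Proof. intro H; apply functional_extensionality; intro s; apply wcat_cdrop, H. Qed.

Lemma strip_Phi a y : strip a (Phi a y) = y.
Proof. apply functional_extensionality; intro s; apply cdrop_wcat. Qed.

Lemma brick_iff_Phi a k : brick a k <-> exists y, k = Phi a y.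
Proof.
  split.
  - intro H; exists (strip a k); symmetry; apply Phi_strip, H.
  - intros [y ->]; apply brick_Phi.
Qed.

Lemma brick_wapp_l a b k : brick (wapp a b) k -> brick a k.
Proof. intros H s; apply (prefix_of_app _ (b s)), H. Qed.

Lemma brick_wapp a b k : brick a k -> brick b (strip a k) -> brick (wapp a b) k.
Proof.
  intros Ha Hb. rewrite <- (Phi_strip a k Ha), <- (Phi_strip b _ Hb), Phi_wapp.
  apply brick_Phi.
Qed.

Lemma fin_supp_wapp a b : fin_supp a -> fin_supp b -> fin_supp (wapp a b).
Proof.
  intros [l1 H1] [l2 H2]; exists (l1 ++ l2); intros s Hs; unfold wapp.
  rewrite H1, H2; auto; intro; apply Hs; apply in_or_app; auto.
Qed.

(* [brick_partition] with the bricks indexed by the members of a list instead of [0..n-1]. *)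
Definition tiling {A} (l : list A) (f : A -> X -> word) : Prop :=
  (forall q, In q l -> fin_supp (f q)) /\
  (forall k, exists q, In q l /\ brick (f q) k) /\
  (forall q1 q2 k, In q1 l -> In q2 l -> brick (f q1) k -> brick (f q2) k -> q1 = q2).

Definition pair : Type := ((X -> word) * (X -> word))%type.

Definition trivial_pair : pair := (fun _ => [], fun _ => []).

Definition swap_pair (p : pair) : pair := (snd p, fst p).

Definition table h (L : list pair) : Prop :=
  tiling L fst /\ tiling L snd /\ forall p y, In p L -> h (Phi (fst p) y) = Phi (snd p) y.

Lemma tiling_map {A B} (l : list A) (m : A -> B) f :
  tiling l (fun q => f (m q)) -> tiling (map m l) f.
Proof.
  intros [H1 [H2 H3]]; split; [|split].
  - intros q Hq; apply in_map_iff in Hq; destruct Hq as [q' [<- Hq']]; auto.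
  - intro k; destruct (H2 k) as [q [Hq Hb]]; exists (m q); split; auto; apply in_map; auto.
  - intros q1 q2 k Hq1 Hq2 B1 B2.
    apply in_map_iff in Hq1; destruct Hq1 as [q1' [<- Hq1]].
    apply in_map_iff in Hq2; destruct Hq2 as [q2' [<- Hq2]].
    f_equal; eapply H3; eauto.
Qed.

Lemma brick_partition_tiling n phi :
  brick_partition n phi <-> tiling (seq 0 n) phi.
Proof.
  split.
  - intros [P1 [P2 P3]]; split; [|split].
    + intros q Hq; apply in_seq in Hq; apply P1; lia.
    + intro k; destruct (P3 k) as [i [Hi Hb]]; exists i; split; auto; apply in_seq; lia.
    + intros q1 q2 k H1 H2 B1 B2; apply in_seq in H1, H2; eapply P2; eauto; lia.
  - intros [P1 [P2 P3]]; split; [|split].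
    + intros i Hi; apply P1, in_seq; lia.
    + intros i j k Hi Hj; apply P3; apply in_seq; lia.
    + intro k; destruct (P2 k) as [i [Hi Hb]]; apply in_seq in Hi; exists i; split; auto; lia.
Qed.

Lemma tiling_nth (L : list pair) (f : pair -> X -> word) :
  NoDup L -> tiling L f -> brick_partition (length L) (fun i => f (nth i L trivial_pair)).
Proof.
  intros HN [P1 [P2 P3]]; split; [|split].
  - intros i Hi; apply P1, nth_In; auto.
  - intros i j k Hi Hj B1 B2. eapply NoDup_nth; eauto.
    eapply P3; eauto; apply nth_In; auto.
  - intro k; destruct (P2 k) as [q [Hq Hb]].
    destruct (In_nth _ _ trivial_pair Hq) as [i [Hi Heq]]. exists i; rewrite Heq; auto.
Qed.

Lemma tiling_nodup (L : list pair) f :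
  tiling L f -> tiling (nodup (fun p1 p2 => excluded_middle_informative (p1 = p2)) L) f.
Proof.
  intros [P1 [P2 P3]]; split; [|split].
  - intros q Hq; apply P1; eapply nodup_In; eauto.
  - intro k; destruct (P2 k) as [q [Hq Hb]]; exists q; split; auto; apply nodup_In; auto.
  - intros q1 q2 k H1 H2; apply P3; eapply nodup_In; eauto.
Qed.

Lemma BV_iff_table h : BV X h <-> exists L, table h L.
Proof.
  split.
  - intros [n [phi [psi [HP [HQ HR]]]]].
    exists (map (fun i => (phi i, psi i)) (seq 0 n)). split; [|split].
    + apply tiling_map, brick_partition_tiling; auto.
    + apply tiling_map, brick_partition_tiling; auto.
    + intros p y Hp; apply in_map_iff in Hp; destruct Hp as [i [<- Hi]]; apply in_seq in Hi.
      apply HR; lia.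
  - intros [L [HP [HQ HR]]].
    set (L0 := nodup (fun p1 p2 => excluded_middle_informative (p1 = p2)) L).
    exists (length L0), (fun i => fst (nth i L0 trivial_pair)),
      (fun i => snd (nth i L0 trivial_pair)).
    split; [|split]; try (apply tiling_nth, tiling_nodup; auto; apply NoDup_nodup).
    intros i k Hi; apply HR. eapply nodup_In, nth_In; eauto.
Qed.

Lemma table_exists L : tiling L fst -> tiling L snd -> exists h, table h L.
Proof.
  intros HP HQ.
  set (ch := fun k => epsilon (inhabits trivial_pair) (fun p => In p L /\ brick (fst p) k)).
  exists (fun k => Phi (snd (ch k)) (strip (fst (ch k)) k)).
  split; [auto|split; [auto|]].
  intros p y Hp.
  assert (Hc : In (ch (Phi (fst p) y)) L /\ brick (fst (ch (Phi (fst p) y))) (Phi (fst p) y)).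
  { apply epsilon_spec. exists p; split; auto; apply brick_Phi. }
  destruct Hc as [Hc1 Hc2].
  assert (ch (Phi (fst p) y) = p) as ->.
  { destruct HP as [_ [_ H3]]; eapply H3; eauto; apply brick_Phi. }
  rewrite strip_Phi; auto.
Qed.

Lemma table_swap h g L : table h L -> (forall x, g (h x) = x) -> table g (map swap_pair L).
Proof.
  intros [HP [HQ HR]] E. split; [apply tiling_map; auto|split; [apply tiling_map; auto|]].
  intros p' y Hp'. apply in_map_iff in Hp'; destruct Hp' as [p [<- Hp]]; simpl.
  rewrite <- HR, E; auto.
Qed.

Lemma table_inverse h L : table h L -> exists g, table g (map swap_pair L) /\
  (forall x, g (h x) = x) /\ (forall x, h (g x) = x).
Proof.
  intros [HP [HQ HR]].
  destruct (table_exists (map swap_pair L)) as [g [_ [_ Hg]]]; try (apply tiling_map; auto).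
  assert (Hg' : forall p y, In p L -> g (Phi (snd p) y) = Phi (fst p) y).
  { intros p y Hp; apply (Hg (swap_pair p)); apply in_map; auto. }
  assert (Hgh : forall x, g (h x) = x).
  { intro x. destruct HP as [_ [H2 _]]. destruct (H2 x) as [p [Hp Hb]].
    rewrite <- (Phi_strip _ _ Hb), HR, Hg'; auto. }
  exists g; split; [apply (table_swap h); [split; auto|exact Hgh]|split; auto].
  intro x. destruct HQ as [_ [H2 _]]. destruct (H2 x) as [p [Hp Hb]].
  rewrite <- (Phi_strip _ _ Hb), Hg', HR; auto.
Qed.

Lemma table_id : table (fun x => x) [trivial_pair].
Proof.
  assert (Ht : forall f : pair -> X -> word, f trivial_pair = (fun _ => []) ->
     tiling [trivial_pair] f).
  { intros f Hf. split; [|split].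
    - intros q [<-|[]]; rewrite Hf; exists []; auto.
    - intro k; exists trivial_pair; split; [left; auto|].
      rewrite Hf; intro s; apply prefix_of_nil.
    - intros q1 q2 k [<-|[]] [<-|[]]; auto. }
  split; [apply Ht; auto|split; [apply Ht; auto|]].
  intros p y [<-|[]]; auto.
Qed.

Lemma tiling_transport {A} (l : list A) f g (k ki : (X -> Cantor) -> (X -> Cantor)) :
  tiling l f -> (forall q, In q l -> fin_supp (g q)) ->
  (forall x, k (ki x) = x) -> (forall x, ki (k x) = x) ->
  (forall q y, In q l -> ki (Phi (f q) y) = Phi (g q) y) -> tiling l g.
Proof.
  intros [_ [H2 H3]] Hf Hk1 Hk2 Hc. split; [auto|split].
  - intro x. destruct (H2 (k x)) as [q [Hq Hb]]. exists q; split; auto.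
    apply brick_iff_Phi in Hb; destruct Hb as [y Hy].
    rewrite <- (Hk2 x), Hy, Hc; auto; apply brick_Phi.
  - intros q1 q2 x H1 H2' B1 B2. apply (H3 q1 q2 (k x)); auto.
    + apply brick_iff_Phi in B1; destruct B1 as [y ->].
      rewrite <- Hc, Hk1; auto; apply brick_Phi.
    + apply brick_iff_Phi in B2; destruct B2 as [y ->].
      rewrite <- Hc, Hk1; auto; apply brick_Phi.
Qed.

Lemma table_precomp h L (k ki : (X -> Cantor) -> (X -> Cantor)) F :
  table h L -> (forall x, k (ki x) = x) -> (forall x, ki (k x) = x) ->
  (forall p, In p L -> fin_supp (F p)) ->
  (forall p y, In p L -> ki (Phi (fst p) y) = Phi (F p) y) ->
  table (fun x => h (k x)) (map (fun p => (F p, snd p)) L).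
Proof.
  intros [HP [HQ HR]] Hk1 Hk2 HF Hc. split; [|split].
  - apply tiling_map; simpl. apply (tiling_transport L fst F k ki); auto.
  - apply tiling_map; simpl; auto.
  - intros p' y Hp'. apply in_map_iff in Hp'; destruct Hp' as [p [<- Hp]]; simpl.
    rewrite <- Hc, Hk1; auto.
Qed.

End Tables.
Arguments wapp {X}. Arguments strip {X}. Arguments tiling {X A}. Arguments table {X}.
Arguments trivial_pair {X}. Arguments swap_pair {X}.

Section Refinement.
Variable X : Type.
Implicit Types (a : X -> word) (k : X -> Cantor) (h : (X -> Cantor) -> (X -> Cantor))
  (L : list (pair X)).

Definition single (x : X) (w : word) : X -> word :=
  fun z => if excluded_middle_informative (z = x) then w else [].

Lemma single_eq x w : single x w x = w.
Proof. unfold single; destruct (excluded_middle_informative (x = x)); congruence. Qed.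

Lemma single_neq x w z : z <> x -> single x w z = [].
Proof. unfold single; destruct (excluded_middle_informative (z = x)); congruence. Qed.

Lemma fin_supp_single x w : fin_supp (single x w).
Proof. exists [x]; intros z Hz; apply single_neq; intro; apply Hz; left; auto. Qed.

Lemma brick_single x w k : brick (single x w) k <-> prefix_of w (k x).
Proof.
  split; [intro H; rewrite <- (single_eq x w); apply H|].
  intros H z. destruct (classic (z = x)) as [->|n]; [rewrite single_eq; auto|].
  rewrite single_neq by auto; apply prefix_of_nil.
Qed.

Lemma length_wapp_single a x bt : length (wapp a (single x [bt]) x) = S (length (a x)).
Proof. unfold wapp; rewrite single_eq, length_app; simpl; lia. Qed.

Lemma wapp_single_neq a x w z : z <> x -> wapp a (single x w) z = a z.
Proof. intro; unfold wapp; rewrite single_neq, app_nil_r; auto. Qed.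

(* Cutting both bricks of [p] in half along [x] keeps the map canonical on each half. *)
Definition half_pair x (bt : bool) (p : pair X) : pair X :=
  (wapp (fst p) (single x [bt]), wapp (snd p) (single x [bt])).

Definition bisect x D L : list (pair X) :=
  flat_map (fun p => if length ((fst p : X -> word) x) <? D
                     then [half_pair x false p; half_pair x true p] else [p]) L.

Lemma in_bisect x D L q : In q (bisect x D L) -> exists p, In p L /\
  ((length (fst p x) < D /\ exists bt, q = half_pair x bt p) \/
   (D <= length (fst p x) /\ q = p)).
Proof.
  intro H. apply in_flat_map in H; destruct H as [p [Hp Hq]]. exists p; split; auto.
  destruct (Nat.ltb_spec (length (fst p x)) D).
  - left; split; auto. destruct Hq as [<-|[<-|[]]]; eauto.
  - right; split; auto. destruct Hq as [<-|[]]; auto.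
Qed.

Lemma half_pair_in_bisect x D L p bt : In p L -> length (fst p x) < D ->
  In (half_pair x bt p) (bisect x D L).
Proof.
  intros Hp Hl. apply in_flat_map; exists p; split; auto.
  rewrite (proj2 (Nat.ltb_lt _ _) Hl). destruct bt; simpl; auto.
Qed.

Lemma in_bisect_long x D L p : In p L -> D <= length (fst p x) -> In p (bisect x D L).
Proof.
  intros Hp Hl. apply in_flat_map; exists p; split; auto.
  rewrite (proj2 (Nat.ltb_ge _ _) Hl). simpl; auto.
Qed.

Lemma brick_half_pair_unique x (w : word) b1 b2 k :
  prefix_of (w ++ [b1]) (k x) -> prefix_of (w ++ [b2]) (k x) -> b1 = b2.
Proof.
  intros B1 B2.
  assert (Hl : forall b, length w < length (w ++ [b])) by (intro; rewrite length_app; simpl; lia).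
  specialize (B1 _ (Hl b1)); specialize (B2 _ (Hl b2)).
  rewrite app_nth2, Nat.sub_diag in B1, B2 by lia. simpl in B1, B2. congruence.
Qed.

Lemma tiling_bisect x D L (f : pair X -> X -> word) :
  (forall bt p, f (half_pair x bt p) = wapp (f p) (single x [bt])) ->
  tiling L f -> tiling (bisect x D L) f.
Proof.
  intros Hc [H1 [H2 H3]]. split; [|split].
  - intros q Hq. destruct (in_bisect _ _ _ _ Hq) as [p [Hp [[_ [bt ->]]|[_ ->]]]]; auto.
    rewrite Hc. apply fin_supp_wapp; auto; apply fin_supp_single.
  - intro k. destruct (H2 k) as [p [Hp Hb]].
    destruct (Nat.lt_ge_cases (length (fst p x)) D) as [Hl|Hl].
    + exists (half_pair x (strip (f p) k x 0) p). split; [apply half_pair_in_bisect; auto|].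
      rewrite Hc. apply brick_wapp; auto. apply brick_single.
      intros i Hi; simpl in Hi. destruct i; [reflexivity|lia].
    + exists p; split; auto. apply in_bisect_long; auto.
  - intros q1 q2 k Hq1 Hq2 B1 B2.
    destruct (in_bisect _ _ _ _ Hq1) as [p1 [Hp1 C1]].
    destruct (in_bisect _ _ _ _ Hq2) as [p2 [Hp2 C2]].
    assert (E1 : brick (f p1) k).
    { destruct C1 as [[_ [bt ->]]|[_ ->]]; auto. rewrite Hc in B1; eapply brick_wapp_l; eauto. }
    assert (E2 : brick (f p2) k).
    { destruct C2 as [[_ [bt ->]]|[_ ->]]; auto. rewrite Hc in B2; eapply brick_wapp_l; eauto. }
    assert (p1 = p2) as <- by (eapply H3; eauto).
    destruct C1 as [[L1 [b1 ->]]|[L1 ->]]; destruct C2 as [[L2 [b2 ->]]|[L2 ->]]; try lia; auto.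
    rewrite Hc in B1, B2. specialize (B1 x); specialize (B2 x).
    unfold wapp in B1, B2; rewrite single_eq in B1, B2.
    rewrite (brick_half_pair_unique x _ b1 b2 k B1 B2); auto.
Qed.

Lemma table_bisect x D h L : table h L -> table h (bisect x D L).
Proof.
  intros [HP [HQ HR]]. split; [|split].
  - apply tiling_bisect; auto.
  - apply tiling_bisect; auto.
  - intros q y Hq. destruct (in_bisect _ _ _ _ Hq) as [p [Hp [[_ [bt ->]]|[_ ->]]]]; auto.
    simpl. rewrite <- !Phi_wapp, HR; auto.
Qed.

Fixpoint bisect_iter x D n L : list (pair X) :=
  match n with 0 => L | S n => bisect x D (bisect_iter x D n L) end.

(* Subdivide until every domain word at every coordinate of [F] has length at least [D]. *)
Fixpoint refine (F : list X) D L : list (pair X) :=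
  match F with [] => L | x :: F => refine F D (bisect_iter x D D L) end.

Lemma table_refine F D h L : table h L -> table h (refine F D L).
Proof.
  revert L; induction F as [|x F IH]; simpl; intros L H; auto.
  apply IH; induction D as [|n] at 2; simpl; auto; apply table_bisect; auto.
Qed.

Lemma in_bisect_iter x D n L q : In q (bisect_iter x D n L) -> exists p, In p L /\
  length (fst q x) = Nat.max (length (fst p x)) (Nat.min D (length (fst p x) + n)) /\
  (forall z, z <> x -> fst q z = fst p z /\ snd q z = snd p z).
Proof.
  revert q; induction n; simpl; intros q Hq.
  - exists q; split; auto; split; [lia|auto].
  - destruct (in_bisect _ _ _ _ Hq) as [p1 [Hp1 C]].
    destruct (IHn _ Hp1) as [p [Hp [Hl Ho]]]. exists p; split; auto.
    destruct C as [[Lt [bt ->]]|[Lt ->]].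
    + simpl. rewrite length_wapp_single. split; [lia|].
      intros z Hz; rewrite !wapp_single_neq by auto; auto.
    + split; auto; lia.
Qed.

Lemma in_refine F D L q : In q (refine F D L) -> exists p, In p L /\
  (forall z, In z F -> length (fst q z) = Nat.max (length (fst p z)) D) /\
  (forall z, ~ In z F -> fst q z = fst p z /\ snd q z = snd p z).
Proof.
  revert L q; induction F as [|x F IH]; simpl; intros L q Hq.
  - exists q; split; auto; split; [tauto|auto].
  - destruct (IH _ _ Hq) as [p1 [Hp1 [A1 A2]]].
    destruct (in_bisect_iter _ _ _ _ _ Hp1) as [p [Hp [B1 B2]]].
    exists p; split; auto; split.
    + intros z [->|Hz].
      * destruct (classic (In z F)) as [HzF|HzF];
          [rewrite A1 by auto|rewrite (proj1 (A2 z HzF))]; rewrite B1; lia.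
      * rewrite A1 by auto. destruct (classic (z = x)) as [->|n].
        -- rewrite B1; lia.
        -- rewrite (proj1 (B2 z n)); auto.
    + intros z Hz. assert (z <> x) by auto. assert (~ In z F) by auto.
      rewrite (proj1 (A2 z H0)), (proj2 (A2 z H0)). apply B2; auto.
Qed.

Lemma table_uniform_depth (T : list X) h L : table h L -> exists D L', table h L' /\
  forall q, In q L' -> (forall x, In x T -> length (fst q x) = D) /\
    exists p, In p L /\ forall z, ~ In z T -> fst q z = fst p z /\ snd q z = snd p z.
Proof.
  intro Hh. set (D := list_max (flat_map (fun p : pair X => map (fun x => length (fst p x)) T) L)).
  exists D, (refine T D L). split; [apply table_refine; auto|]. intros q Hq.
  destruct (in_refine _ _ _ _ Hq) as [p [Hp [A1 A2]]]. split; [|exists p; auto].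
  intros x Hx. rewrite A1 by auto.
  enough (length (fst p x) <= D) by lia.
  apply le_list_max, in_flat_map. exists p; split; auto. apply in_map_iff; exists x; auto.
Qed.

End Refinement.
Arguments single {X}. Arguments bisect {X}. Arguments refine {X}.

Section Composition.
Variable X : Type.
Implicit Types (a b : X -> word) (f g : (X -> Cantor) -> (X -> Cantor)).

Lemma fin_supp_list {A} (L : list A) (proj : A -> X -> word) :
  (forall p, In p L -> fin_supp (proj p)) ->
  exists F, forall p x, In p L -> ~ In x F -> proj p x = [].
Proof.
  induction L as [|p L IH]; intros H.
  - exists []; intros p x [].
  - destruct (H p (or_introl eq_refl)) as [l1 H1].
    destruct IH as [F HF]; [intros; apply H; right; auto|].
    exists (l1 ++ F); intros q x [<-|Hq] Hx.
    + apply H1; intro; apply Hx, in_or_app; auto.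
    + apply HF; auto; intro; apply Hx, in_or_app; auto.
Qed.

Definition wdiff b a : X -> word := fun x => skipn (length (b x)) (a x).

Lemma fin_supp_wdiff b a : fin_supp a -> fin_supp (wdiff b a).
Proof. intros [l H]; exists l; intros s Hs; unfold wdiff; rewrite H; auto; apply skipn_nil. Qed.

Lemma tiling_below {A} (l : list A) (t : A -> X -> word) a :
  tiling l t -> (forall q x, In q l -> length (t q x) <= length (a x)) ->
  exists q, In q l /\ wapp (t q) (wdiff (t q) a) = a.
Proof.
  intros [_ [Hcov _]] Hle.
  set (k0 := Phi a (fun _ _ => false)).
  destruct (Hcov k0) as [q [Hq Hb]]. exists q; split; auto.
  apply functional_extensionality; intro x; unfold wapp, wdiff. symmetry.
  apply (prefix_of_extends _ _ (k0 x)); auto; apply brick_Phi.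
Qed.

Lemma table_comp f g Lf Lg : table f Lf -> table g Lg -> exists L, table (fun x => f (g x)) L.
Proof.
  intros Hf Hg.
  destruct (fin_supp_list Lg snd) as [F HF]; [apply Hg|].
  set (D := list_max (flat_map (fun p => map (fun x => length (snd p x)) F) Lg)).
  set (Lf' := refine F D Lf).
  assert (Hf' : table f Lf') by (apply table_refine; auto).
  assert (Hbelow : forall q, In q Lf' ->
    exists p, In p Lg /\ wapp (snd p) (wdiff (snd p) (fst q)) = fst q).
  { intros q Hq. destruct (in_refine _ _ _ _ _ Hq) as [q0 [_ [HA _]]].
    apply tiling_below; [apply Hg|]. intros p x Hp.
    destruct (classic (In x F)) as [Hx|Hx].
    - rewrite HA by auto.
      enough (length (snd p x) <= D) by lia.
      apply le_list_max, in_flat_map. exists p; split; auto.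
      apply in_map_iff; exists x; split; auto.
    - rewrite HF by auto. simpl; lia. }
  destruct (table_inverse _ g Lg Hg) as [gi [Hgi [E1 E2]]].
  set (pick := fun q : pair X => epsilon (inhabits trivial_pair)
    (fun p => In p Lg /\ wapp (snd p) (wdiff (snd p) (fst q)) = fst q)).
  assert (Hpick : forall q, In q Lf' ->
    In (pick q) Lg /\ wapp (snd (pick q)) (wdiff (snd (pick q)) (fst q)) = fst q).
  { intros q Hq; apply epsilon_spec; auto. }
  exists (map (fun q => (wapp (fst (pick q)) (wdiff (snd (pick q)) (fst q)), snd q)) Lf').
  apply table_precomp with (ki := gi); auto.
  - intros q Hq. apply fin_supp_wapp.
    + apply Hg, Hpick; auto.
    + apply fin_supp_wdiff, Hf'; auto.
  - intros q y Hq. destruct (Hpick q Hq) as [H1 H2].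
    rewrite <- H2 at 1. rewrite <- !Phi_wapp.
    destruct Hgi as [_ [_ HR]]. apply (HR (swap_pair (pick q))). apply in_map; auto.
Qed.

End Composition.

Section Subgroup.
Variable S : Type.
Variable P : S -> Prop.
Notation SP := {x : S | P x}.

Definition restrict_addr (a : S -> word) : SP -> word := fun z => a (proj1_sig z).

Definition extend_zero (k : SP -> Cantor) : S -> Cantor :=
  fun x => match excluded_middle_informative (P x) with
           | left p => k (exist _ x p) | right _ => fun _ => false end.

Definition extend_addr (a : SP -> word) : S -> word :=
  fun x => match excluded_middle_informative (P x) with
           | left p => a (exist _ x p) | right _ => [] end.

Definition supported_in (L : list (pair S)) :=
  forall p x, In p L -> ~ P x -> fst p x = [] /\ snd p x = [].

Lemma extend_zero_in k x (p : P x) : extend_zero k x = k (exist _ x p).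
Proof.
  unfold extend_zero; destruct (excluded_middle_informative (P x)) as [p'|n]; [|contradiction].
  f_equal; f_equal; apply proof_irrelevance.
Qed.

Lemma extend_addr_in a x (p : P x) : extend_addr a x = a (exist _ x p).
Proof.
  unfold extend_addr; destruct (excluded_middle_informative (P x)) as [p'|n]; [|contradiction].
  f_equal; f_equal; apply proof_irrelevance.
Qed.

Lemma extend_addr_out a x : ~ P x -> extend_addr a x = [].
Proof. unfold extend_addr; destruct (excluded_middle_informative (P x)); tauto. Qed.

Lemma brick_restrict_addr a k : (forall x, ~ P x -> a x = []) ->
  brick (restrict_addr a) k <-> brick a (extend_zero k).
Proof.
  intro Ha; split.
  - intros H x. destruct (classic (P x)) as [p|n].
    + rewrite (extend_zero_in k x p). apply (H (exist _ x p)).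
    + rewrite Ha by auto; apply prefix_of_nil.
  - intros H [x p]. unfold restrict_addr; simpl. rewrite <- (extend_zero_in k x p). apply H.
Qed.

Lemma brick_extend_addr a k : brick (extend_addr a) k <-> brick a (restrictT P k).
Proof.
  split.
  - intros H [x p]. unfold restrictT; simpl. rewrite <- (extend_addr_in a x p). apply H.
  - intros H x. destruct (classic (P x)) as [p|n].
    + rewrite (extend_addr_in a x p). apply (H (exist _ x p)).
    + rewrite extend_addr_out by auto; apply prefix_of_nil.
Qed.

Lemma fin_supp_restrict_addr a : fin_supp a -> fin_supp (restrict_addr a).
Proof.
  intros [l H].
  exists (flat_map (fun x => match excluded_middle_informative (P x) with
                             | left p => [exist P x p] | right _ => [] end) l).
  intros [x p] Hz. unfold restrict_addr; simpl. apply H. intro Hx. apply Hz.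
  apply in_flat_map; exists x; split; auto.
  destruct (excluded_middle_informative (P x)) as [p'|n]; [|contradiction].
  left; f_equal; apply proof_irrelevance.
Qed.

Lemma fin_supp_extend_addr a : fin_supp a -> fin_supp (extend_addr a).
Proof.
  intros [l H]. exists (map (@proj1_sig _ _) l). intros x Hx.
  destruct (classic (P x)) as [p|n]; [|apply extend_addr_out; auto].
  rewrite (extend_addr_in a x p). apply H. intro Hin; apply Hx.
  apply in_map_iff; exists (exist _ x p); auto.
Qed.

Lemma tiling_restrict_addr {A} (l : list A) f : tiling l f ->
  (forall q x, In q l -> ~ P x -> f q x = []) -> tiling l (fun q => restrict_addr (f q)).
Proof.
  intros [H1 [H2 H3]] Hs. split; [|split].
  - intros q Hq; apply fin_supp_restrict_addr; auto.
  - intro k. destruct (H2 (extend_zero k)) as [q [Hq Hb]]. exists q; split; auto.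
    apply brick_restrict_addr; auto.
  - intros q1 q2 k Hq1 Hq2 B1 B2. apply (H3 q1 q2 (extend_zero k)); auto;
      eapply brick_restrict_addr; eauto.
Qed.

Lemma tiling_extend_addr {A} (l : list A) f :
  tiling l f -> tiling l (fun q => extend_addr (f q)).
Proof.
  intros [H1 [H2 H3]]. split; [|split].
  - intros q Hq; apply fin_supp_extend_addr; auto.
  - intro k. destruct (H2 (restrictT P k)) as [q [Hq Hb]]. exists q; split; auto.
    apply brick_extend_addr; auto.
  - intros q1 q2 k Hq1 Hq2 B1 B2. apply (H3 q1 q2 (restrictT P k)); auto;
      apply brick_extend_addr; auto.
Qed.

Lemma extend_zero_Phi a y : (forall x, ~ P x -> a x = []) ->
  extend_zero (Phi (restrict_addr a) y) = Phi a (extend_zero y).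
Proof.
  intro Ha; apply functional_extensionality; intro x. unfold Phi.
  destruct (classic (P x)) as [p|n].
  - rewrite !extend_zero_in with (p := p). reflexivity.
  - rewrite Ha by auto. unfold extend_zero.
    destruct (excluded_middle_informative (P x)); [contradiction|]. rewrite wcat_nil; auto.
Qed.

Lemma restrictT_Phi a y : restrictT P (Phi (extend_addr a) y) = Phi a (restrictT P y).
Proof.
  apply functional_extensionality; intros [z pz]; unfold restrictT, Phi; simpl.
  rewrite (extend_addr_in _ z pz); auto.
Qed.

Lemma table_fixes_outside h L : table h L -> supported_in L ->
  forall k x, ~ P x -> h k x = k x.
Proof.
  intros [[_ [HC _]] [_ HR]] Hs k x Hx. destruct (HC k) as [p [Hp Hb]].
  rewrite <- (Phi_strip _ _ _ Hb), HR by auto. unfold Phi, strip.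
  rewrite (proj1 (Hs p x Hp Hx)), (proj2 (Hs p x Hp Hx)). simpl. rewrite wcat_nil, cdrop0; auto.
Qed.

Lemma table_local h L : table h L -> supported_in L ->
  forall k k', (forall x, P x -> k x = k' x) -> forall x, P x -> h k x = h k' x.
Proof.
  intros [[_ [HC _]] [_ HR]] Hs k k' Hkk x Hx. destruct (HC k) as [p [Hp Hb]].
  assert (Hb' : brick (fst p) k').
  { intro z. destruct (classic (P z)) as [pz|nz].
    - rewrite <- Hkk by auto; apply Hb.
    - rewrite (proj1 (Hs p z Hp nz)); apply prefix_of_nil. }
  rewrite <- (Phi_strip _ _ _ Hb), <- (Phi_strip _ _ _ Hb'), !HR by auto.
  unfold Phi, strip. rewrite Hkk; auto.
Qed.

Lemma subV_of_table h L : table h L -> supported_in L -> subV P h.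
Proof.
  intros HR Hs.
  exists (fun k : SP -> Cantor => restrictT P (h (extend_zero k))). split.
  - apply BV_iff_table. exists (map (fun p => (restrict_addr (fst p), restrict_addr (snd p))) L).
    destruct HR as [HP [HQ HR]]. split; [|split].
    + apply tiling_map, tiling_restrict_addr; auto. intros; apply Hs; auto.
    + apply tiling_map, tiling_restrict_addr; auto. intros; apply Hs; auto.
    + intros p' y Hp'. apply in_map_iff in Hp'; destruct Hp' as [p [<- Hp]]; simpl.
      rewrite extend_zero_Phi by (intros; apply Hs; auto). rewrite HR by auto.
      apply functional_extensionality; intros [x px]. unfold restrictT, Phi, restrict_addr; simpl.
      rewrite extend_zero_in with (p := px); auto.
  - apply functional_extensionality; intro k; apply functional_extensionality; intro x.
    unfold extendT. destruct (excluded_middle_informative (P x)) as [p|n].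
    + unfold restrictT; simpl. apply (table_local h L HR Hs); auto.
      intros z pz. rewrite extend_zero_in with (p := pz); auto.
    + apply (table_fixes_outside h L HR Hs); auto.
Qed.

Lemma table_of_subV f : subV P f -> exists L, table f L.
Proof.
  intros [h [HB ->]]. apply BV_iff_table in HB. destruct HB as [L [HP [HQ HR]]].
  exists (map (fun p => (extend_addr (fst p), extend_addr (snd p))) L). split; [|split].
  - apply tiling_map, tiling_extend_addr; auto.
  - apply tiling_map, tiling_extend_addr; auto.
  - intros p' y Hp'. apply in_map_iff in Hp'; destruct Hp' as [p [<- Hp]]; simpl.
    apply functional_extensionality; intro x. unfold extendT.
    destruct (excluded_middle_informative (P x)) as [px|n].
    + rewrite restrictT_Phi, HR by auto. unfold Phi, restrictT; simpl.
      rewrite (extend_addr_in _ x px); auto.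
    + unfold Phi. rewrite !extend_addr_out by auto. auto.
Qed.

End Subgroup.
Arguments supported_in {S}.

Lemma app_eq_length_l {A} (a b c d : list A) : length a = length b -> a ++ c = b ++ d -> a = b.
Proof.
  revert b; induction a as [|x a IH]; intros [|y b] Hl He; simpl in *; try congruence.
  injection He as -> He. f_equal; auto.
Qed.

Section Cells.
Variable X : Type.
Implicit Types (c : X -> word) (k : X -> Cantor) (T : list X).

Definition upd c x w : X -> word :=
  fun z => if excluded_middle_informative (z = x) then w else c z.

Lemma upd_eq c x w : upd c x w x = w.
Proof. unfold upd; destruct (excluded_middle_informative (x = x)); congruence. Qed.

Lemma upd_neq c x w z : z <> x -> upd c x w z = c z.
Proof. unfold upd; destruct (excluded_middle_informative (z = x)); congruence. Qed.

Fixpoint words n : list word :=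
  match n with
  | 0 => [[]]
  | S n => flat_map (fun w => [false :: w; true :: w]) (words n)
  end.

Lemma in_words n w : In w (words n) <-> length w = n.
Proof.
  revert w; induction n; simpl; intro w.
  - split; [intros [<-|[]]; auto|destruct w; simpl; [auto|discriminate]].
  - rewrite in_flat_map. split.
    + intros [v [Hv [<-|[<-|[]]]]]; simpl; f_equal; apply IHn; auto.
    + destruct w as [|bt v]; simpl; [discriminate|]. intro Hl. exists v; split; [apply IHn; auto|].
      destruct bt; simpl; auto.
Qed.

Definition is_cell T D c :=
  (forall x, In x T -> length (c x) = D) /\ (forall x, ~ In x T -> c x = []).

Fixpoint cells T D : list (X -> word) :=
  match T with
  | [] => [fun _ => []]
  | x :: T => flat_map (fun c => map (fun w => upd c x w) (words D)) (cells T D)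
  end.

Lemma in_cells_is_cell T D c : In c (cells T D) -> is_cell T D c.
Proof.
  revert c; induction T as [|x T IH]; simpl; intros c Hc.
  - destruct Hc as [<-|[]]; split; [intros ? []|auto].
  - apply in_flat_map in Hc; destruct Hc as [c0 [H0 Hc]]. apply in_map_iff in Hc.
    destruct Hc as [w [<- Hw]]. apply in_words in Hw. destruct (IH _ H0) as [A1 A2].
    split.
    + intros z Hz. destruct (classic (z = x)) as [->|n]; [rewrite upd_eq; auto|].
      rewrite upd_neq by auto. apply A1. destruct Hz; [congruence|auto].
    + intros z Hz. rewrite upd_neq by (intro; apply Hz; left; auto).
      apply A2; intro; apply Hz; right; auto.
Qed.

Lemma is_cell_in_cells T D c : NoDup T -> is_cell T D c -> In c (cells T D).
Proof.
  revert c; induction T as [|x T IH]; simpl; intros c HN [A1 A2].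
  - left; apply functional_extensionality; intro z; symmetry; apply A2; auto.
  - inversion HN; subst. apply in_flat_map.
    exists (upd c x []). split.
    + apply IH; auto. split.
      * intros z Hz. rewrite upd_neq by (intro; subst; contradiction). apply A1; right; auto.
      * intros z Hz. destruct (classic (z = x)) as [->|n]; [apply upd_eq|].
        rewrite upd_neq by auto. apply A2. intros [|]; auto.
    + apply in_map_iff. exists (c x); split; [|apply in_words, A1; left; auto].
      apply functional_extensionality; intro z. unfold upd.
      destruct (excluded_middle_informative (z = x)); subst; auto.
Qed.

Definition concat_cell T c : word := flat_map c T.

Lemma concat_cell_ext T c1 c2 : (forall x, In x T -> c1 x = c2 x) ->
  concat_cell T c1 = concat_cell T c2.
Proof.
  unfold concat_cell; induction T; simpl; intro H; auto.
  rewrite H by auto. f_equal; apply IHT; auto.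
Qed.

Lemma concat_cell_upd T c x w : ~ In x T -> concat_cell T (upd c x w) = concat_cell T c.
Proof.
  intro H; apply concat_cell_ext; intros z Hz; apply upd_neq; intros ->; contradiction.
Qed.

Lemma length_concat_cell T D c : (forall x, In x T -> length (c x) = D) ->
  length (concat_cell T c) = length T * D.
Proof.
  induction T; simpl; intro H; auto.
  unfold concat_cell in *; simpl. rewrite length_app, H, IHT; auto.
Qed.

Lemma concat_cell_inj T D c1 c2 : (forall x, In x T -> length (c1 x) = D /\ length (c2 x) = D) ->
  concat_cell T c1 = concat_cell T c2 -> forall x, In x T -> c1 x = c2 x.
Proof.
  induction T as [|x0 T IH]; simpl; intros H He x Hx; [contradiction|].
  unfold concat_cell in He; simpl in He.
  destruct (H x0 (or_introl eq_refl)) as [L1 L2].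
  assert (E1 : c1 x0 = c2 x0) by (eapply app_eq_length_l; eauto; congruence).
  destruct Hx as [->|Hx]; auto.
  apply IH; auto. rewrite E1 in He. apply app_inv_head in He; auto.
Qed.

Fixpoint split_word T D (z : Cantor) : X -> word :=
  match T with
  | [] => fun _ => []
  | x :: T => upd (split_word T D (cdrop D z)) x (ctake D z)
  end.

Lemma split_word_is_cell T D z : NoDup T -> is_cell T D (split_word T D z).
Proof.
  revert z; induction T as [|x T IH]; simpl; intros z HN.
  - split; [intros ? []|auto].
  - inversion HN; subst. destruct (IH (cdrop D z) H2) as [A1 A2]. split.
    + intros x' [->|Hx']; [rewrite upd_eq; apply length_ctake|].
      rewrite upd_neq by (intro; subst; contradiction). auto.
    + intros x' Hx'. rewrite upd_neq by (intro; apply Hx'; left; auto).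
      apply A2; intro; apply Hx'; right; auto.
Qed.

Lemma prefix_of_split_word T D z : NoDup T -> prefix_of (concat_cell T (split_word T D z)) z.
Proof.
  revert z; induction T as [|x T IH]; simpl; intros z HN.
  - apply prefix_of_nil.
  - inversion HN; subst. unfold concat_cell; simpl. rewrite upd_eq.
    fold (concat_cell T (upd (split_word T D (cdrop D z)) x (ctake D z))).
    rewrite concat_cell_upd by auto.
    apply prefix_of_app; split; [apply prefix_of_ctake|]. rewrite length_ctake; apply IH; auto.
Qed.

Lemma tiling_cells T D : NoDup T -> tiling (cells T D) (fun c : X -> word => c).
Proof.
  intro HN; split; [|split].
  - intros c Hc. exists T. apply in_cells_is_cell in Hc. apply Hc.
  - intro k. exists (fun x => if excluded_middle_informative (In x T) then ctake D (k x) else []).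
    split; [apply is_cell_in_cells; auto; split|]; intros x;
      destruct (excluded_middle_informative (In x T)); try tauto.
    + intros _; apply length_ctake.
    + apply prefix_of_ctake.
    + apply prefix_of_nil.
  - intros c1 c2 k H1 H2 B1 B2. apply in_cells_is_cell in H1, H2.
    apply functional_extensionality; intro x. destruct (classic (In x T)) as [Hx|Hx].
    + apply (prefix_of_unique _ _ (k x)); auto. rewrite (proj1 H1), (proj1 H2); auto.
    + rewrite (proj2 H1), (proj2 H2); auto.
Qed.

Lemma tiling_concat_cells T D (u : X) : NoDup T ->
  tiling (cells T D) (fun c => single u (concat_cell T c)).
Proof.
  intro HN; split; [|split].
  - intros; apply fin_supp_single.
  - intro k. exists (split_word T D (k u)); split.
    + apply is_cell_in_cells, split_word_is_cell; auto.
    + apply brick_single, prefix_of_split_word; auto.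
  - intros c1 c2 k H1 H2 B1 B2. apply in_cells_is_cell in H1, H2.
    apply brick_single in B1, B2.
    assert (E : concat_cell T c1 = concat_cell T c2).
    { apply (prefix_of_unique _ _ (k u)); auto.
      rewrite (length_concat_cell T D), (length_concat_cell T D); auto; [apply H2|apply H1]. }
    apply functional_extensionality; intro x. destruct (classic (In x T)) as [Hx|Hx].
    + apply (concat_cell_inj T D); auto. intros; split; [apply H1|apply H2]; auto.
    + rewrite (proj2 H1), (proj2 H2); auto.
Qed.

Lemma brick_two_singles (u r : X) e w k : u <> r ->
  (brick (wapp (single u e) (single r w)) k <-> prefix_of e (k u) /\ prefix_of w (k r)).
Proof.
  intro Hur. split.
  - intro H. split.
    + specialize (H u). unfold wapp in H. rewrite single_eq, single_neq, app_nil_r in H; auto.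
    + specialize (H r). unfold wapp in H. rewrite single_eq, single_neq in H; auto.
  - intros [H1 H2] x. unfold wapp.
    destruct (classic (x = u)) as [->|n1].
    + rewrite single_eq, single_neq, app_nil_r; auto.
    + rewrite (single_neq _ u e x n1). simpl.
      destruct (classic (x = r)) as [->|n2]; [rewrite single_eq; auto|].
      rewrite single_neq by auto; apply prefix_of_nil.
Qed.

(* The bijection moving [cdrop N (k u)] into coordinate [r] carries one family onto the other. *)
Lemma tiling_merge {A} (l : list A) (u r : X) (e w : A -> word) N : u <> r ->
  (forall q, In q l -> length (e q) = N) ->
  tiling l (fun q => wapp (single u (e q)) (single r (w q))) ->
  tiling l (fun q => single u (e q ++ w q)).
Proof.
  intros Hur HN [_ [H2 H3]].
  set (k' := fun (k : X -> Cantor) x =>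
    if excluded_middle_informative (x = r) then cdrop N (k u) else k x).
  assert (K1 : forall k, k' k u = k u).
  { intro k; unfold k'; destruct (excluded_middle_informative (u = r)); congruence. }
  assert (K2 : forall k, k' k r = cdrop N (k u)).
  { intro k; unfold k'; destruct (excluded_middle_informative (r = r)); congruence. }
  assert (Hb : forall q k, In q l -> brick (single u (e q ++ w q)) k <->
      brick (wapp (single u (e q)) (single r (w q))) (k' k)).
  { intros q k Hq. rewrite brick_single, brick_two_singles, K1, K2, prefix_of_app, HN by auto.
    tauto. }
  split; [|split].
  - intros; apply fin_supp_single.
  - intro k. destruct (H2 (k' k)) as [q [Hq B]]. exists q; split; auto. apply Hb; auto.
  - intros q1 q2 k Hq1 Hq2 B1 B2. apply (H3 q1 q2 (k' k)); auto; apply Hb; auto.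
Qed.

End Cells.
Arguments cells {X}. Arguments concat_cell {X}. Arguments is_cell {X}.

Section Generation.
Variable S : Type.
Variable E : S -> S -> Prop.
Notation Gen := (generated (fun f => exists s t, E s t /\ edgeV s t f)).
Implicit Types (h f g : (S -> Cantor) -> (S -> Cantor)) (T : list S) (L : list (pair S)).

Definition BV_on T h := exists L, table h L /\ supported_in (fun x => In x T) L.

Lemma generated_inverse f L : Gen f -> table f L ->
  exists fi, Gen fi /\ (forall x, fi (f x) = x) /\ (forall x, f (fi x) = x).
Proof.
  intros Hg HR. destruct (table_inverse _ f L HR) as [fi [_ [E1 E2]]].
  exists fi; split; auto. apply (gen_inv _ f fi); auto.
Qed.

Lemma edge_generated u r h : E u r -> BV_on [u; r] h -> Gen h.
Proof.
  intros He [L [HR Hs]]. apply gen_base. exists u, r; split; auto.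
  apply (subV_of_table _ _ h L HR). intros p x Hp Hx. apply Hs; auto.
  intros [|[|[]]]; apply Hx; auto.
Qed.

Section Attach.
Variables (T : list S) (u r : S).
Hypotheses (HN : NoDup T) (Hu : In u T) (Hr : ~ In r T) (Eur : E u r)
  (IHT : forall g, BV_on T g -> Gen g).

Lemma u_neq_r : u <> r.
Proof. intros ->; contradiction. Qed.

Definition gather_table D : list (pair S) :=
  map (fun c => (c, single u (concat_cell T c))) (cells T D).

Lemma gather_generated D : exists sg, table sg (gather_table D) /\ Gen sg.
Proof.
  destruct (table_exists _ (gather_table D)) as [sg Hsg].
  - apply tiling_map, tiling_cells; auto.
  - apply tiling_map, tiling_concat_cells; auto.
  - exists sg; split; auto. apply IHT. exists (gather_table D); split; auto.
    intros p x Hp Hx. apply in_map_iff in Hp; destruct Hp as [c [<- Hc]]; simpl. split.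
    + apply in_cells_is_cell in Hc. apply Hc; auto.
    + apply single_neq. intros ->; contradiction.
Qed.

Lemma gather_Phi D sg a y : table sg (gather_table D) ->
  (forall x, In x T -> length (a x) = D) -> (forall x, ~ In x (r :: T) -> a x = []) ->
  sg (Phi a y) = Phi (wapp (single u (concat_cell T a)) (single r (a r))) y.
Proof.
  intros [_ [_ Hsg]] Hlen Hsupp.
  set (aT := fun x => if excluded_middle_informative (In x T) then a x else []).
  assert (Ha : a = wapp aT (single r (a r))).
  { apply functional_extensionality; intro x; unfold wapp, aT.
    destruct (excluded_middle_informative (In x T)) as [Hx|Hx].
    - rewrite single_neq, app_nil_r; auto. intros ->; contradiction.
    - destruct (classic (x = r)) as [->|n]; [rewrite single_eq; auto|].
      rewrite single_neq by auto. simpl. apply Hsupp. intros [|]; auto. }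
  assert (HaT : concat_cell T aT = concat_cell T a).
  { apply concat_cell_ext. intros x Hx; unfold aT.
    destruct (excluded_middle_informative (In x T)); tauto. }
  rewrite Ha at 1. rewrite <- Phi_wapp, (Hsg (aT, single u (concat_cell T aT))).
  - simpl. rewrite HaT, <- Phi_wapp. reflexivity.
  - apply in_map_iff. exists aT; split; auto. apply is_cell_in_cells; auto.
    split; intros x Hx; unfold aT; destruct (excluded_middle_informative (In x T)); auto; tauto.
Qed.

Lemma merge_generated {A} (l : list A) (e w : A -> word) N :
  (forall q, In q l -> length (e q) = N) ->
  tiling l (fun q => wapp (single u (e q)) (single r (w q))) ->
  exists rh, Gen rh /\
    table rh (map (fun q => (wapp (single u (e q)) (single r (w q)), single u (e q ++ w q))) l).
Proof.
  intros Hlen Ht.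
  destruct (table_exists _
    (map (fun q => (wapp (single u (e q)) (single r (w q)), single u (e q ++ w q))) l))
    as [rh Hrh].
  - apply tiling_map; auto.
  - apply tiling_map, (tiling_merge _ l u r e w N); auto using u_neq_r.
  - exists rh; split; auto.
    apply (edge_generated u r); auto. eexists; split; eauto.
    intros p x Hp Hx. apply in_map_iff in Hp; destruct Hp as [q [<- Hq]]; simpl.
    assert (x <> u) by (intros ->; apply Hx; left; auto).
    assert (x <> r) by (intros ->; apply Hx; right; left; auto).
    unfold wapp. rewrite !single_neq by auto. auto.
Qed.

(* Precomposing with generated elements, make all domain words at [r] empty: gather the
   [T]-coordinates of each domain brick into [u] (using [T]), then append the word at [r]
   there too (using the edge [u r]). *)
Lemma clear_domain_at_r h L : table h L -> supported_in (fun x => In x (r :: T)) L ->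
  exists k ki L', Gen k /\ (forall x, k (ki x) = x) /\ (forall x, ki (k x) = x) /\
    table (fun x => h (k x)) L' /\ supported_in (fun x => In x (r :: T)) L' /\
    (forall p, In p L' -> fst p r = []) /\
    ((forall p, In p L -> snd p r = []) -> forall p, In p L' -> snd p r = []).
Proof.
  intros HR Hs.
  destruct (table_uniform_depth _ T h L HR) as [D [L1 [HR1 HL1]]].
  assert (Hs1 : supported_in (fun x => In x (r :: T)) L1).
  { intros q x Hq Hx. destruct (HL1 q Hq) as [_ [p [Hp Hpq]]].
    assert (HxT : ~ In x T) by (intro; apply Hx; right; auto).
    rewrite (proj1 (Hpq x HxT)), (proj2 (Hpq x HxT)). apply Hs; auto. }
  destruct (gather_generated D) as [sg [Hsg Gsg]].
  destruct (generated_inverse sg _ Gsg Hsg) as [sgi [Gsgi [S1 S2]]].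
  set (Sg := fun q : pair S => wapp (single u (concat_cell T (fst q))) (single r (fst q r))).
  set (Tg := fun q : pair S => single u (concat_cell T (fst q) ++ fst q r)).
  assert (Hsig : forall q y, In q L1 -> sg (Phi (fst q) y) = Phi (Sg q) y).
  { intros q y Hq. apply (gather_Phi D); auto; [apply HL1; auto|].
    intros x Hx; apply (Hs1 q x Hq Hx). }
  assert (PS : tiling L1 Sg).
  { apply (tiling_transport _ L1 fst Sg sgi sg); auto; [apply HR1|].
    intros; apply fin_supp_wapp; apply fin_supp_single. }
  destruct (merge_generated L1 (fun q => concat_cell T (fst q)) (fun q => fst q r)
    (length T * D)) as [rh [Grh Hrh]]; auto.
  { intros q Hq. apply length_concat_cell, HL1; auto. }
  destruct (generated_inverse rh _ Grh Hrh) as [rhi [Grhi [R1 R2]]].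
  exists (fun x => sgi (rhi x)), (fun x => rh (sg x)), (map (fun q => (Tg q, snd q)) L1).
  split; [apply gen_comp; auto|]. split; [intro x; rewrite R1, S1; auto|].
  split; [intro x; rewrite S2, R2; auto|]. split; [|split; [|split]].
  - apply table_precomp with (ki := fun x => rh (sg x)).
    + auto.
    + intro x; rewrite R1, S1; auto.
    + intro x; rewrite S2, R2; auto.
    + intros; apply fin_supp_single.
    + intros q y Hq. rewrite Hsig by auto. destruct Hrh as [_ [_ Hr3]].
      apply (Hr3 (Sg q, Tg q)). apply in_map_iff; exists q; split; auto.
  - intros p x Hp Hx. apply in_map_iff in Hp; destruct Hp as [q [<- Hq]]; simpl. split.
    + unfold Tg; apply single_neq. intros ->; apply Hx; right; auto.
    + apply (Hs1 q x Hq Hx).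
  - intros p Hp. apply in_map_iff in Hp; destruct Hp as [q [<- Hq]]; simpl.
    unfold Tg; apply single_neq; auto using u_neq_r.
  - intros Hsnd p Hp. apply in_map_iff in Hp; destruct Hp as [q [<- Hq]]; simpl.
    destruct (HL1 q Hq) as [_ [p [Hp Hpq]]]. rewrite (proj2 (Hpq r Hr)); auto.
Qed.

(* Clear the domain words at [r], invert, and clear them again: what is left is supported in
   [T]. *)
Lemma attach_generated h : BV_on (r :: T) h -> Gen h.
Proof.
  intros [L [HR Hs]].
  destruct (clear_domain_at_r h L HR Hs) as [k1 [ki1 [L1 [Gk1 [K1 [K2 [HR1 [Hs1 [Hdom1 _]]]]]]]]].
  destruct (table_inverse _ _ L1 HR1) as [g [Hg [_ G2]]].
  assert (Hsg : supported_in (fun x => In x (r :: T)) (map swap_pair L1)).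
  { intros p x Hp Hx. apply in_map_iff in Hp; destruct Hp as [q [<- Hq]]; simpl.
    destruct (Hs1 q x Hq Hx); auto. }
  destruct (clear_domain_at_r g _ Hg Hsg)
    as [k2 [_ [L2 [Gk2 [_ [_ [HR2 [Hs2 [Hdom2 Hcod2]]]]]]]]].
  assert (Gw : Gen (fun x => g (k2 x))).
  { apply IHT. exists L2; split; auto. intros p x Hp Hx.
    destruct (classic (x = r)) as [->|n].
    - split; [apply Hdom2; auto|]. apply Hcod2; auto.
      intros q Hq. apply in_map_iff in Hq; destruct Hq as [q0 [<- Hq0]]; simpl. auto.
    - apply Hs2; auto. intros [|]; auto. }
  destruct (generated_inverse _ _ Gw HR2) as [wi [Gwi [_ W2]]].
  assert (Gki1 : Gen ki1) by (apply (gen_inv _ k1); auto).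
  replace h with (fun x => k2 (wi (ki1 x))).
  - apply gen_comp; [|apply gen_comp]; auto.
  - apply functional_extensionality; intro x.
    rewrite <- (G2 (k2 (wi (ki1 x)))), W2, K1. auto.
Qed.

End Attach.

Inductive tree_list : list S -> Prop :=
| tree_edge s t : E s t -> tree_list [s; t]
| tree_leaf T u r : tree_list T -> In u T -> E u r -> ~ In r T -> tree_list (r :: T).

Lemma tree_list_nodup T : (forall x, ~ E x x) -> tree_list T -> NoDup T.
Proof.
  intros Eirr; induction 1.
  - constructor; [intros [->|[]]; apply (Eirr s); auto|constructor; [intros []|constructor]].
  - constructor; auto.
Qed.

Lemma tree_list_generated T h : (forall x, ~ E x x) -> tree_list T -> BV_on T h -> Gen h.
Proof.
  intros Eirr HT; revert h; induction HT.
  - intro; apply edge_generated; auto.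
  - apply (attach_generated T u r); auto. apply tree_list_nodup; auto.
Qed.

Lemma tree_list_grow u x T : clos_refl_trans_1n S E u x -> tree_list T -> In u T ->
  exists T', tree_list T' /\ incl T T' /\ In x T'.
Proof.
  intro Hux; revert T; induction Hux as [u|u z x Huz Hzx IH]; intros T HT Hu.
  - exists T; split; auto using incl_refl.
  - destruct (classic (In z T)) as [Hz|Hz]; [apply (IH T); auto|].
    destruct (IH (z :: T)) as [T' [H1 [H2 H3]]].
    + apply tree_leaf with u; auto.
    + left; auto.
    + exists T'; split; auto. split; auto. intros y Hy; apply H2; right; auto.
Qed.

Lemma tree_list_covers F : (exists s t : S, s <> t) -> (forall x y, clos_refl_trans S E x y) ->
  exists T, tree_list T /\ incl F T.
Proof.
  intros [s [t Hst]] Econn. induction F as [|x F IH].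
  - pose proof (clos_rt_rt1n _ _ _ _ (Econn s t)) as H.
    inversion H; subst; [contradiction|]. exists [s; y]; split; [apply tree_edge; auto|intros _ []].
  - destruct IH as [T [HT HF]].
    assert (exists v, In v T) as [v Hv] by (destruct HT; eexists; left; eauto).
    destruct (tree_list_grow v x T (clos_rt_rt1n _ _ _ _ (Econn v x)) HT Hv)
      as [T' [H1 [H2 H3]]].
    exists T'; split; auto. intros z [<-|Hz]; auto.
Qed.

End Generation.

Lemma table_finite_support {X} (h : (X -> Cantor) -> (X -> Cantor)) L :
  table h L -> exists F, supported_in (fun x => In x F) L.
Proof.
  intros [HP [HQ _]].
  destruct (fin_supp_list _ L fst) as [F1 HF1]; [apply HP|].
  destruct (fin_supp_list _ L snd) as [F2 HF2]; [apply HQ|].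
  exists (F1 ++ F2). intros p x Hp Hx.
  split; [apply HF1|apply HF2]; auto; intro; apply Hx, in_or_app; auto.
Qed.

Lemma generated_BV {X} (G : ((X -> Cantor) -> (X -> Cantor)) -> Prop) h :
  (forall f, G f -> BV X f) -> generated G h -> BV X h.
Proof.
  intros HG; induction 1 as [f Hf| |f g _ IHf _ IHg|f g _ IHf E1 E2].
  - auto.
  - apply BV_iff_table. exists [trivial_pair]. apply table_id.
  - apply BV_iff_table in IHf, IHg. destruct IHf as [Lf Hf], IHg as [Lg Hg].
    apply BV_iff_table. apply (table_comp _ f g Lf Lg); auto.
  - apply BV_iff_table in IHf. destruct IHf as [L HL]. apply BV_iff_table.
    exists (map swap_pair L). apply (table_swap _ f g L); auto.
Qed.

Theorem proposition3p2 (S : Type) (E : S -> S -> Prop)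
  (hS : exists s t : S, s <> t)
  (Esym : forall x y, E x y -> E y x)
  (Eirr : forall x, ~ E x x)
  (Econn : forall x y, clos_refl_trans S E x y) :
  forall h : (S -> Cantor) -> (S -> Cantor),
    BV S h <-> generated (fun f => exists s t, E s t /\ edgeV s t f) h.
Proof.
  intro h; split.
  - intro HB. apply BV_iff_table in HB as [L HR].
    destruct (table_finite_support h L HR) as [F HF].
    destruct (tree_list_covers S E F hS Econn) as [T [HT HFT]].
    apply (tree_list_generated S E T h Eirr HT). exists L; split; auto.
    intros p x Hp Hx. apply HF; auto.
  - apply generated_BV. intros f [s [t [_ He]]].
    apply BV_iff_table, (table_of_subV _ _ f He).
Qed.
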